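(* Let $\sigma\in S_t$ and $p\in S_k$, and let $m=\min(t-1,k)$. If $\mathrm{red}(p_1\cdots p_m)\neq\mathrm{red}(\sigma_1\cdots\sigma_m)$, then the set $\{1\}$ is reversibly deletable for $p$ with respect to $\{(\sigma,[t-2])\}$ (the vincular pattern $\sigma_1\sigma_2\cdots\sigma_{t-1}\text{-}\sigma_t$).
   Context: $\mathrm{red}(w)$ replaces the $i$-th smallest letter of a word of distinct integers by $i$. A vincular pattern of length $\ell$ is $(\sigma,X)$ with $\sigma\in S_\ell$, $X\subseteq[\ell-1]$; $\pi\in S_n$ contains it if there are $i_1<\dots<i_\ell$ with $\mathrm{red}(\pi_{i_1}\cdots\pi_{i_\ell})=\sigma$ and $i_{x+1}=i_x+1$ for all $x\in X$. For $p\in S_k$ and $w\in[n]^k$ with distinct letters and $\mathrm{red}(w)=p$, $S_n^B(p;w)$ is the set of $B$-avoiding $\pi\in S_n$ with $\pi_i=w_i$ for $i\le k$. $d_R(\pi)$ deletes the entries in positions in $R$ and reduces; for words $d_R(w)$ deletes $w_r$ ($r\in R$) and subtracts from each remaining $w_i$ the number of $r\in R$ with $w_r<w_i$. $R\subseteq[k]$ is reversibly deletable for $p$ w.r.t. $B$ if for every $n$ and every such $w$ with $S_n^B(p;w)\ne\emptyset$, $d_R$ restricts to a bijection $S_n^B(p;w)\to S_{n-|R|}^B(d_R(p);d_R(w))$. *)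

(* Permutations / words are seq nat with values 1-indexed;
   positions in the paper are 1-indexed, list indices are 0-indexed. *)
From mathcomp Require Import all_boot.
Set Implicit Arguments. Unset Strict Implicit. Unset Printing Implicit Defensive.

(* red(w): replace the i-th smallest letter by i (w has distinct letters). *)
Definition red (w : seq nat) : seq nat :=
  [seq (count (fun y => y < x) w).+1 | x <- w].

Definition is_perm (n : nat) (pi : seq nat) : bool := perm_eq pi (iota 1 n).

(* A vincular pattern (sigma, X) with X a list of elements of [l-1]. *)
Definition vpattern := (seq nat * seq nat)%type.

(* pi contains (sigma, X): there are (0-indexed) positions
   idx = [i_1 < ... < i_l] in pi with red(pi_{i_1}...pi_{i_l}) = sigma and
   i_{x+1} = i_x + 1 for x in X (x is 1-indexed: i_x = nth idx (x-1)). *)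
Definition contains (pi : seq nat) (P : vpattern) : Prop :=
  exists idx : seq nat,
    [/\ size idx = size P.1, sorted ltn idx, all (fun i => i < size pi) idx,
        red [seq nth 0 pi i | i <- idx] = P.1
      & all (fun x => nth 0 idx x == (nth 0 idx x.-1).+1) P.2].

Definition avoids (B : seq vpattern) (pi : seq nat) : Prop :=
  forall P, P \in B -> ~ contains pi P.

Definition is_word (n k : nat) (w : seq nat) : bool :=
  [&& size w == k, uniq w & all (fun x => 0 < x <= n) w].

(* pi in S_n^B(p; w) : B-avoiding pi in S_n with pi_i = w_i for i <= |w|
   (the set is considered for red(w) = p). *)
Definition SB (n : nat) (B : seq vpattern) (p w : seq nat) (pi : seq nat) : Prop :=
  [/\ red w = p, is_perm n pi, avoids B pi & take (size w) pi = w].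

(* entries of s at the (1-indexed) positions not in R *)
Definition keep (R : seq nat) (s : seq nat) : seq nat :=
  [seq nth 0 s i.-1 | i <- iota 1 (size s) & i \notin R].

Definition dR_perm (R : seq nat) (pi : seq nat) : seq nat := red (keep R pi).

Definition dR_word (R : seq nat) (w : seq nat) : seq nat :=
  [seq x - count (fun r => nth 0 w r.-1 < x) R | x <- keep R w].

Definition rev_deletable (B : seq vpattern) (p : seq nat) (R : seq nat) : Prop :=
  uniq R /\ all (fun r => 0 < r <= size p) R /\
  forall (n : nat) (w : seq nat),
    is_word n (size p) w -> red w = p ->
    (exists pi, SB n B p w pi) ->
    [/\ (forall pi, SB n B p w pi ->
           SB (n - size R) B (dR_perm R p) (dR_word R w) (dR_perm R pi)),
        (forall pi1 pi2, SB n B p w pi1 -> SB n B p w pi2 ->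
           dR_perm R pi1 = dR_perm R pi2 -> pi1 = pi2)
      & (forall pi', SB (n - size R) B (dR_perm R p) (dR_word R w) pi' ->
           exists2 pi, SB n B p w pi & dR_perm R pi = pi')].

From mathcomp Require Import all_boot.
From mathcomp Require Import zify.
Set Implicit Arguments. Unset Strict Implicit. Unset Printing Implicit Defensive.

(* Under the prefix hypothesis, deleting the first entry of a permutation
   neither creates nor destroys occurrences of sigma_1...sigma_{t-1}-sigma_t.

   Let pi = w_1 :: s be in S_n^B(p; w), so that d_{1}(pi) = red s.  An
   occurrence of the pattern in pi that uses position 1 must occupy the
   consecutive positions 1, ..., t-1; then the first m = min(t-1, k) entries
   of pi, which are those of w, reduce to the first m entries of sigma, and
   red w = p contradicts the hypothesis.  Since occurrences are invariant
   under reduction, pi contains the pattern iff red s does.  On the other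
   hand red s is obtained from s by the order isomorphism [unbump w_1], whose
   inverse [bump w_1] rebuilds pi from d_{1}(pi) and w_1. *)

Definition rank (s : seq nat) (x : nat) : nat := count (fun y => y < x) s.

Lemma redE s : red s = [seq (rank s x).+1 | x <- s].
Proof. by []. Qed.

Lemma rank_lt (s : seq nat) (x y : nat) : x \in s -> x < y -> rank s x < rank s y.
Proof.
move=> xs xy; rewrite /rank.
have := count_predUI (fun z => z < x) (pred1 x) s.
have -> : count (predI (fun z => z < x) (pred1 x)) s = 0.
  apply/eqP; rewrite -leqn0 leqNgt -has_count.
  by apply/hasP=> -[z _ /andP[/= + /eqP ze]]; rewrite ze ltnn.
have : 0 < count (pred1 x) s by rewrite -has_count has_pred1.
have : count (predU (fun z => z < x) (pred1 x)) s <= count (fun z => z < y) s.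
  by apply: sub_count => z /= /orP[zx | /eqP->] //; apply: ltn_trans zx xy.
move=> le_U pos_x eq_U; apply: leq_trans le_U.
by rewrite addn0 in eq_U; rewrite eq_U -[X in X < _]addn0 ltn_add2l.
Qed.

Lemma rank_mono (s : seq nat) :
  {in s &, forall x y, ((rank s y).+1 < (rank s x).+1) = (y < x)}.
Proof.
move=> x y xs ys; rewrite ltnS; case: (ltngtP y x) => [yx | xy | ->].
- exact: rank_lt.
- by apply/negbTE; rewrite -leqNgt ltnW // rank_lt.
- by rewrite ltnn.
Qed.

Lemma red_map f s : {in s &, forall x y, (f y < f x) = (y < x)} -> red (map f s) = red s.
Proof.
move=> f_mono; rewrite /red -map_comp; apply/eq_in_map => x xs /=; congr S.
by rewrite count_map; apply: eq_in_count => y ys /=; apply: f_mono.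
Qed.

Lemma red_ranks s s' : {subset s' <= s} -> red [seq (rank s x).+1 | x <- s'] = red s'.
Proof. by move=> sub; apply: red_map => x y xs ys; apply: rank_mono; apply: sub. Qed.

Lemma red_take m s : red (take m (red s)) = red (take m s).
Proof. by rewrite [red s]redE -map_take red_ranks // => x; apply: mem_take. Qed.

Lemma red_behead s : red (behead (red s)) = red (behead s).
Proof. by rewrite [red s]redE behead_map red_ranks // => x; apply: mem_behead. Qed.

Lemma perm_iota_of_sub (s : seq nat) n :
  uniq s -> {subset s <= iota 1 n} -> n <= size s -> is_perm n s.
Proof.
move=> us sub n_le.
have [_ eq_mem] := uniq_min_size us sub ltac:(by rewrite size_iota).
exact: uniq_perm us (iota_uniq _ _) eq_mem.
Qed.

Lemma red_is_perm s : uniq s -> is_perm (size s) (red s).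
Proof.
move=> us; apply: perm_iota_of_sub; last by rewrite size_map.
  rewrite redE map_inj_in_uniq // => x y xs ys [] eq_rank.
  case: (ltngtP x y) => // [lt_xy | lt_yx].
    by have := rank_lt xs lt_xy; rewrite eq_rank ltnn.
  by have := rank_lt ys lt_yx; rewrite eq_rank ltnn.
move=> z /mapP[x xs ->]; rewrite mem_iota add1n ltnS /= /rank.
rewrite -(count_predC (fun y => y < x) s) -[X in X < _]addn0 ltn_add2l.
by rewrite -has_count; apply/hasP; exists x => //=; rewrite ltnn.
Qed.

Lemma rank_iota a n x : rank (iota a n) x = minn (x - a) n.
Proof.
rewrite /rank; elim: n a => [|n IH] a /=; first lia.
by rewrite IH; case: (ltnP a x) => /=; lia.
Qed.

Lemma is_perm_cons_uniq n w0 s : is_perm n (w0 :: s) -> w0 \notin s /\ uniq s.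
Proof. by move=> /perm_uniq; rewrite iota_uniq => /andP. Qed.

Lemma red_tail w0 s n : is_perm n (w0 :: s) -> red s = map (unbump w0) s.
Proof.
move=> perm_ws; rewrite redE; apply/eq_in_map => x xs.
have x_in : x \in iota 1 n by rewrite -(perm_mem perm_ws) inE xs orbT.
have w0_in : w0 \in iota 1 n by rewrite -(perm_mem perm_ws) mem_head.
move: x_in w0_in; rewrite !mem_iota => /andP[x1 xn] /andP[w1 wn].
have := permP perm_ws (fun y => y < x).
rewrite -[count _ (iota 1 n)]/(rank (iota 1 n) x) rank_iota /= /rank /unbump.
by case: (ltnP w0 x) => /=; lia.
Qed.

Lemma unbump_mono w0 (s : seq nat) :
  w0 \notin s -> {in s &, forall x y, (unbump w0 y < unbump w0 x) = (y < x)}.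
Proof.
move=> w0_fresh x y xs ys.
have /negP x_w0 : x != w0 by apply: contraNneq w0_fresh => <-.
have /negP y_w0 : y != w0 by apply: contraNneq w0_fresh => <-.
rewrite /unbump; case: (ltngtP w0 x); case: (ltngtP w0 y) => //= *; apply/idP/idP; lia.
Qed.

Lemma bump_unbump_map w0 (s : seq nat) : w0 \notin s -> map (bump w0) (map (unbump w0) s) = s.
Proof.
move=> w0_fresh; rewrite -map_comp; apply: map_id_in => x xs /=.
by apply: unbumpK; rewrite inE; apply: contraNneq w0_fresh => <-.
Qed.

Lemma is_perm_cons_bump w0 n s :
  0 < w0 <= n -> is_perm (n - 1) s -> is_perm n (w0 :: map (bump w0) s).
Proof.
move=> w0_range perm_s; have us : uniq s by rewrite (perm_uniq perm_s) iota_uniq.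
apply: perm_iota_of_sub.
- rewrite /= map_inj_uniq ?us ?andbT; last exact: can_inj (bumpK w0).
  by apply/mapP=> -[y _ /eqP]; rewrite (negbTE (neq_bump _ _)).
- move=> z; rewrite inE => /orP[/eqP-> | /mapP[y y_in ->]]; rewrite mem_iota; first lia.
  by move: y_in; rewrite (perm_mem perm_s) mem_iota /bump; case: leqP => /=; lia.
- by rewrite /= size_map (perm_size perm_s) size_iota; lia.
Qed.

Lemma keep_head s : keep [:: 1] s = behead s.
Proof.
case: s => [|a s] //; rewrite /keep /= (@eq_in_filter _ _ predT); last first.
  by move=> i; rewrite mem_iota inE => /andP[]; case: eqP => // ->.
rewrite filter_predT; apply: (@eq_from_nth _ 0); rewrite size_map size_iota //.
by move=> i lt_i; rewrite (nth_map 0) ?size_iota // nth_iota.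
Qed.

Lemma dR_perm_head s : dR_perm [:: 1] s = red (behead s).
Proof. by rewrite /dR_perm keep_head. Qed.

Lemma dR_word_head w0 ws : dR_word [:: 1] (w0 :: ws) = map (unbump w0) ws.
Proof. by rewrite /dR_word keep_head; apply: eq_map => x /=; rewrite addn0. Qed.

(* idx lists the positions of an occurrence of P in pi; by definition
   [contains pi P] is [exists idx, occurrence pi P idx]. *)
Definition occurrence (pi : seq nat) (P : vpattern) (idx : seq nat) : Prop :=
  [/\ size idx = size P.1, sorted ltn idx, all (fun i => i < size pi) idx,
      red [seq nth 0 pi i | i <- idx] = P.1
    & all (fun x => nth 0 idx x == (nth 0 idx x.-1).+1) P.2].

Lemma avoids_single Q pi : avoids [:: Q] pi <-> ~ contains pi Q.
Proof.
split=> [avoid_Q | no_Q R]; first by apply: avoid_Q; rewrite inE.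
by rewrite inE => /eqP->.
Qed.

Lemma nth_mapS (s : seq nat) i :
  nth 0 (map S s) i = if i < size s then (nth 0 s i).+1 else 0.
Proof.
by case: ltnP => [lt_i | le_i]; [rewrite (nth_map 0) | rewrite nth_default ?size_map].
Qed.

Lemma adjacent_mapS (s : seq nat) x :
  (nth 0 (map S s) x == (nth 0 (map S s) x.-1).+1) = (nth 0 s x == (nth 0 s x.-1).+1).
Proof.
rewrite !nth_mapS; case: (ltnP x (size s)) => lt_x; last by rewrite (nth_default 0 lt_x).
by have -> : x.-1 < size s by lia.
Qed.

Lemma occurrence_shift a s P idx :
  occurrence (a :: s) P (map S idx) <-> occurrence (red s) P idx.
Proof.
have red_occ : all (fun i => i < size s) idx ->
    red [seq nth 0 (a :: s) i | i <- map S idx] = red [seq nth 0 (red s) i | i <- idx].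
  move=> /allP idx_lt; rewrite -map_comp /=.
  have -> : [seq nth 0 (red s) i | i <- idx] =
             [seq (rank s x).+1 | x <- [seq nth 0 s i | i <- idx]].
    by rewrite -map_comp; apply/eq_in_map => i i_in /=; rewrite redE (nth_map 0) ?idx_lt.
  by rewrite red_ranks // => _ /mapP[i i_in ->]; rewrite mem_nth ?idx_lt.
have size_red : size (red s) = size s by rewrite size_map.
rewrite /occurrence size_map sorted_map all_map size_red.
under [all (fun x => _ == _) _]eq_all do rewrite adjacent_mapS.
by split=> -[? ? idx_lt ? ?]; split=> //; rewrite ?red_occ // -?red_occ.
Qed.

(* An occurrence of sigma_1...sigma_{t-1}-sigma_t starting at the first
   position occupies positions 1..t-1, so the prefix of length t-1 of pi is
   order isomorphic to that of sigma. *)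
Lemma occurrence_at_start pi sigma idx :
  occurrence pi (sigma, iota 1 (size sigma - 2)) idx -> nth 0 idx 0 = 0 ->
  red (take (size sigma - 1) pi) = red (take (size sigma - 1) sigma).
Proof.
case=> /= size_idx _ idx_lt red_occ gaps idx0; set t := size sigma in size_idx gaps *.
have idx_j j : j <= t - 2 -> nth 0 idx j = j.
  elim: j => [|j IH] le_j //; have := allP gaps j.+1.
  rewrite mem_iota (_ : 1 <= j.+1 < 1 + (t - 2)); last by lia.
  by move=> /(_ isT) /eqP->; rewrite IH //; lia.
have le_t : t - 1 <= size pi.
  have [|lt_1t] := leqP t 1; first lia.
  have lt_t2 : t - 2 < size idx by rewrite size_idx; lia.
  by have := allP idx_lt _ (mem_nth 0 lt_t2); rewrite idx_j //; lia.
have take_occ : take (t - 1) [seq nth 0 pi i | i <- idx] = take (t - 1) pi.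
  apply: (@eq_from_nth _ 0); first by rewrite !size_take_min size_map size_idx; lia.
  move=> j; rewrite size_take_min size_map size_idx => lt_j.
  by rewrite !nth_take ?(nth_map 0) ?idx_j //; lia.
by rewrite -[in RHS]red_occ red_take take_occ.
Qed.

Lemma contains_cons a s sigma :
  red (take (size sigma - 1) (a :: s)) != red (take (size sigma - 1) sigma) ->
  contains (a :: s) (sigma, iota 1 (size sigma - 2)) <->
  contains (red s) (sigma, iota 1 (size sigma - 2)).
Proof.
move=> prefix_differs; split=> [[idx occ_idx] | [idx occ_idx]]; last first.
  by exists (map S idx); apply/occurrence_shift.
have idx0 : nth 0 idx 0 != 0.
  by apply: contraNneq prefix_differs => idx0; apply/eqP/(occurrence_at_start occ_idx).
have idx_pos : all (leq 1) idx.
  case: occ_idx idx0 => _ + _ _ _; case: idx => //= i0 idx sorted_idx i0_pos.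
  rewrite lt0n i0_pos /=; apply: sub_all (order_path_min ltn_trans sorted_idx) => i.
  by apply: leq_ltn_trans.
exists (map predn idx); apply/(occurrence_shift a).
rewrite -map_comp map_id_in // => i /(allP idx_pos); exact: prednK.
Qed.

Section DeleteFirstEntry.

Variables (n k : nat) (sigma p : seq nat) (w0 : nat) (ws : seq nat).

Local Notation B := [:: (sigma, iota 1 (size sigma - 2))].
Local Notation w := (w0 :: ws).

Hypothesis size_w : size w = k.
Hypothesis red_w : red w = p.
Hypothesis w0_range : 0 < w0 <= n.
Hypothesis w0_fresh : w0 \notin ws.
Hypothesis prefix_differs :
  red (take (minn (size sigma - 1) k) p) != red (take (minn (size sigma - 1) k) sigma).

Lemma prefix_not_pattern s : take (size ws) s = ws ->
  red (take (size sigma - 1) (w0 :: s)) != red (take (size sigma - 1) sigma).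
Proof.
move=> take_s; move: prefix_differs; apply: contra_neq => eq_prefix.
set m := minn _ k.
have take_w : take k (w0 :: s) = w by rewrite -size_w /= take_s.
have m_le_t : m <= size sigma - 1 := geq_minl _ _.
rewrite -red_w red_take -take_w (take_takel _ (geq_minr _ _)).
rewrite -[in LHS](take_takel _ m_le_t) -[in LHS]red_take eq_prefix red_take.
by rewrite take_takel.
Qed.

Lemma SB_head pi : SB n B p w pi -> exists s, pi = w0 :: s.
Proof. by case: pi => [|a s] [_ _ _] //= [-> _]; exists s. Qed.

Lemma SB_consE s :
  SB n B p w (w0 :: s) <-> [/\ take (size ws) s = ws, is_perm n (w0 :: s) & avoids B (red s)].
Proof.
have avoidsE : take (size ws) s = ws -> avoids B (w0 :: s) <-> avoids B (red s).
  move=> take_s; rewrite !avoids_single; apply: not_iff_compat.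
  exact/contains_cons/prefix_not_pattern.
split=> [[_ perm_s avoid_s [take_s]] | [take_s perm_s avoid_s]].
  by split=> //; apply/avoidsE.
by split=> //; [apply/avoidsE | rewrite /= take_s].
Qed.

Lemma red_dR_word : red (dR_word [:: 1] w) = dR_perm [:: 1] p.
Proof.
rewrite dR_word_head dR_perm_head -red_w red_behead /= red_map //.
exact: unbump_mono.
Qed.

Lemma SB_deletedE pi' :
  SB (n - 1) B (dR_perm [:: 1] p) (dR_word [:: 1] w) pi' <->
  [/\ is_perm (n - 1) pi', avoids B pi' & take (size ws) pi' = map (unbump w0) ws].
Proof.
rewrite /SB red_dR_word dR_word_head size_map.
by split=> [[_ perm_pi avoid_pi take_pi] | [perm_pi avoid_pi take_pi]].
Qed.

Lemma dR_SB pi : SB n B p w pi ->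
  SB (n - 1) B (dR_perm [:: 1] p) (dR_word [:: 1] w) (dR_perm [:: 1] pi).
Proof.
move=> SB_pi; have [s pi_eq] := SB_head SB_pi; subst pi.
case/SB_consE: SB_pi => take_s perm_s avoid_s; apply/SB_deletedE.
rewrite dR_perm_head /=; split=> //; last by rewrite (red_tail perm_s) -map_take take_s.
have [_ uniq_s] := is_perm_cons_uniq perm_s.
have size_s : size s = n - 1 by rewrite -(size_iota 1 n) -(perm_size perm_s) subn1.
by rewrite -size_s; apply: red_is_perm.
Qed.

(* d_{1} is injective on S_n^B(p; w): the head is w0 and [bump w0] undoes
   the reduction of the tail. *)
Lemma dR_injective pi1 pi2 : SB n B p w pi1 -> SB n B p w pi2 ->
  dR_perm [:: 1] pi1 = dR_perm [:: 1] pi2 -> pi1 = pi2.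
Proof.
move=> SB1 SB2; have [s1 eq1] := SB_head SB1; have [s2 eq2] := SB_head SB2; subst pi1 pi2.
case/SB_consE: SB1 => _ perm1 _; case/SB_consE: SB2 => _ perm2 _.
rewrite !dR_perm_head /= (red_tail perm1) (red_tail perm2) => eq_red.
have [fresh1 _] := is_perm_cons_uniq perm1; have [fresh2 _] := is_perm_cons_uniq perm2.
by rewrite -(bump_unbump_map fresh1) eq_red bump_unbump_map.
Qed.

(* Every pi' is d_{1} of w0 :: map (bump w0) pi'. *)
Lemma dR_surjective pi' : SB (n - 1) B (dR_perm [:: 1] p) (dR_word [:: 1] w) pi' ->
  exists2 pi, SB n B p w pi & dR_perm [:: 1] pi = pi'.
Proof.
case/SB_deletedE => perm_pi' avoid_pi' take_pi'.
have perm_pi := is_perm_cons_bump w0_range perm_pi'.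
have red_bumped : red (map (bump w0) pi') = pi'.
  by rewrite (red_tail perm_pi) -map_comp map_id_in // => y _; apply: bumpK.
exists (w0 :: map (bump w0) pi'); last by rewrite dR_perm_head /= red_bumped.
apply/SB_consE; split; rewrite ?red_bumped //.
by rewrite -map_take take_pi' bump_unbump_map.
Qed.

End DeleteFirstEntry.

(* Main theorem: the empty word w is impossible since k > 0 (otherwise the
   prefixes of length 0 would agree), and for w = w0 :: ws the three
   properties of d_{1} are the lemmas of the section. *)
Theorem mainTheorem5 (t k : nat) (sigma p : seq nat) :
  is_perm t sigma -> is_perm k p ->
  red (take (minn (t - 1) k) p) != red (take (minn (t - 1) k) sigma) ->
  rev_deletable [:: (sigma, iota 1 (t - 2))] p [:: 1].
Proof.
move=> perm_sigma perm_p prefix_differs.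
have size_sigma : size sigma = t by rewrite (perm_size perm_sigma) size_iota.
have size_p : size p = k by rewrite (perm_size perm_p) size_iota.
have k_gt0 : 0 < k.
  by case: posnP prefix_differs => // ->; rewrite minn0 !take0 eqxx.
rewrite -size_sigma in prefix_differs *.
split=> //; split; first by rewrite /= size_p k_gt0.
move=> n [|w0 ws] /and3P[/eqP size_w uniq_w range_w] red_w _.
  by move: size_w; rewrite size_p /=; lia.
move: uniq_w range_w => /= /andP[w0_fresh _] /andP[w0_range _].
rewrite size_p in size_w.
split=> [pi | pi1 pi2 | pi'].
- exact: (dR_SB size_w red_w w0_fresh prefix_differs).
- exact: (dR_injective size_w red_w prefix_differs).
- exact: (dR_surjective size_w red_w w0_range w0_fresh prefix_differs).
Qed.
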